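(* Let $n\ge 2$ and let $v_1<\cdots<v_{n-1}$ be positive integers with $\mathrm{ML}(v_1,\ldots,v_{n-1})=L$. Let $t_1,\ldots,t_r$ be the (finitely many) times $t\in[0,1)$ at which $\Vert t v_i\Vert\ge L$ for all $1\le i\le n-1$. For each $j$, let $\rho_j$ be the largest index $i$ such that $t_j v_i$ has fractional part $L$, and let $\lambda_j$ be the largest index $i$ such that $t_j v_i$ has fractional part $1-L$. Define $\mu=\min_{1\le j\le r}\min\{\rho_j,\lambda_j\}$, and let $D$ be the least common multiple of the denominators of the $t_j$ written as reduced fractions. Then there is a constant $C$ (depending on $v_1,\ldots,v_{n-1}$) such that for every integer $v_n\ge C$ that is a multiple of $D$, $$\mathrm{ML}(v_1,\ldots,v_n)=\frac{v_n L}{v_n+v_\mu}.$$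
   Context: For a real number $x$, $\Vert x\Vert$ denotes the distance from $x$ to the nearest integer. For positive integers $v_1,\ldots,v_k$, the maximum loneliness is $\mathrm{ML}(v_1,\ldots,v_k)=\max_{t\in\mathbb{R}}\min_{1\le i\le k}\Vert t v_i\Vert$. *)

From Stdlib Require Import Reals ZArith Lra.
Open Scope R_scope.

(* fractional part {x} = x - floor x  (Int_part x = up x - 1 = floor x) *)
Definition frac (x : R) : R := x - IZR (Int_part x).

Definition dnorm (x : R) : R := Rmin (frac x) (1 - frac x).

(* min_{1 <= i <= k} ||t v_i||  (the empty minimum, k = 0, is set to 1;
   never used since k >= 1 below) *)
Fixpoint mint (v : nat -> nat) (k : nat) (t : R) : R :=
  match k with
  | O => 1
  | S k' => Rmin (mint v k' t) (dnorm (t * INR (v (S k'))))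
  end.

Definition is_ML (v : nat -> nat) (k : nat) (L : R) : Prop :=
  (exists t : R, mint v k t = L) /\ (forall t : R, mint v k t <= L).

Definition vext (v : nat -> nat) (n w : nat) : nat -> nat :=
  fun i => if Nat.eqb i n then w else v i.

Definition inT (v : nat -> nat) (k : nat) (L t : R) : Prop :=
  0 <= t < 1 /\ forall i : nat, (1 <= i <= k)%nat -> L <= dnorm (t * INR (v i)).

(* largest i in 1..k with P i (0 if none) *)
Fixpoint largest_idx (P : nat -> bool) (k : nat) : nat :=
  match k with
  | O => O
  | S k' => if P (S k') then S k' else largest_idx P k'
  end.

Definition Reqb (x y : R) : bool := if Req_EM_T x y then true else false.

Definition rho (v : nat -> nat) (k : nat) (L t : R) : nat :=
  largest_idx (fun i => Reqb (frac (t * INR (v i))) L) k.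
Definition lam (v : nat -> nat) (k : nat) (L t : R) : nat :=
  largest_idx (fun i => Reqb (frac (t * INR (v i))) (1 - L)) k.

Definition is_mu (v : nat -> nat) (k : nat) (L : R) (mu : nat) : Prop :=
  (exists t, inT v k L t /\ Nat.min (rho v k L t) (lam v k L t) = mu) /\
  (forall t, inT v k L t -> (mu <= Nat.min (rho v k L t) (lam v k L t))%nat).

Definition is_denom (t : R) (q : nat) : Prop :=
  (0 < q)%nat /\ exists p : Z, t = IZR p / INR q /\ Z.gcd p (Z.of_nat q) = 1%Z.

Definition is_lcm_denoms (v : nat -> nat) (k : nat) (L : R) (D : nat) : Prop :=
  (0 < D)%nat /\
  (forall t q, inT v k L t -> is_denom t q -> Nat.divide q D) /\
  (forall m, (0 < m)%nat ->
     (forall t q, inT v k L t -> is_denom t q -> Nat.divide q m) -> Nat.divide D m).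

From Stdlib Require Import Reals ZArith Lra Lia Classical_Prop.
Open Scope R_scope.

(* Write M(w) = w L / (w + v_mu).  Each time t_j of maximal loneliness is
   rational with denominator dividing D, so t_j w is an integer when D | w.
   For t just left of t_j we have ||t v_rho_j|| <= L - (t_j - t) v_rho_j and
   ||t w|| <= (t_j - t) w, and the smaller of the two is at most
   w L / (w + v_rho_j) <= M(w); right of t_j the same holds with lambda_j.
   Away from the t_j, compactness keeps min_i ||t v_i|| a fixed amount below
   L, while M(w) tends to L.  Conversely, at the time t_j and the side
   realising mu, the point t_j - L / (w + v_mu) attains M(w): there
   ||t w|| = M(w), the ||t v_i|| with i <= rho_j drop by at most L - M(w), and
   those with i > rho_j do not have fractional part L at t_j, so they stay
   above L once w is large. *)

Definition eqmod1 (x a : R) : Prop := exists m : Z, x = IZR m + a.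

Definition for_large (P : nat -> Prop) : Prop :=
  exists N, forall m, (N <= m)%nat -> P m.

Lemma Rdiv_le_of_le_mul a b c : 0 < c -> a <= b * c -> a / c <= b.
Proof.
  intros Hc H. apply Rmult_le_reg_r with c; [lra|].
  unfold Rdiv. rewrite Rmult_assoc, Rinv_l, Rmult_1_r by lra. exact H.
Qed.

Lemma Rle_div_of_mul_le a b c : 0 < c -> a * c <= b -> a <= b / c.
Proof.
  intros Hc H. apply Rmult_le_reg_r with c; [lra|].
  unfold Rdiv. rewrite Rmult_assoc, Rinv_l, Rmult_1_r by lra. exact H.
Qed.

Lemma Int_part_unique x m : IZR m <= x < IZR m + 1 -> Int_part x = m.
Proof.
  intros [H1 H2]. destruct (base_Int_part x) as [H3 H4].
  assert (Hlt1 : IZR (Int_part x - m) < 1) by (rewrite minus_IZR; lra).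
  assert (Hlt2 : IZR (m - Int_part x) < 1) by (rewrite minus_IZR; lra).
  apply lt_IZR in Hlt1, Hlt2. lia.
Qed.

Lemma frac_bounds x : 0 <= frac x < 1.
Proof. unfold frac. destruct (base_Int_part x). lra. Qed.

Lemma frac_IZR_add m a : 0 <= a < 1 -> frac (IZR m + a) = a.
Proof. intros Ha. unfold frac. rewrite (Int_part_unique _ m); lra. Qed.

Lemma IZR_Int_part_add_frac x : IZR (Int_part x) + frac x = x.
Proof. unfold frac. ring. Qed.

Lemma frac_eq_iff x a : 0 <= a < 1 -> frac x = a <-> eqmod1 x a.
Proof.
  intros Ha. split.
  - intros <-. exists (Int_part x). now rewrite IZR_Int_part_add_frac.
  - intros [m ->]. now apply frac_IZR_add.
Qed.

Lemma eqmod1_opp x a : eqmod1 (- x) a <-> eqmod1 x (1 - a).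
Proof. split; intros [m Hm]; exists (- m - 1)%Z; rewrite minus_IZR, opp_IZR; lra. Qed.

Lemma dnorm_IZR_add m a : 0 <= a <= 1 -> dnorm (IZR m + a) = Rmin a (1 - a).
Proof.
  intros Ha. unfold dnorm. destruct (Req_dec a 1) as [->|Ha1].
  - replace (IZR m + 1) with (IZR (m + 1) + 0) by (rewrite plus_IZR; ring).
    rewrite frac_IZR_add by lra. unfold Rmin; repeat destruct Rle_dec; lra.
  - now rewrite frac_IZR_add by lra.
Qed.

Lemma dnorm_le_dist x m : dnorm x <= Rabs (x - IZR m).
Proof.
  unfold dnorm. pose proof (IZR_Int_part_add_frac x). pose proof (frac_bounds x).
  destruct (Z_le_gt_dec m (Int_part x)) as [Hm|Hm]; [apply IZR_le in Hm|].
  - rewrite Rabs_right by lra. apply Rle_trans with (frac x); [apply Rmin_l | lra].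
  - assert (H' : (Int_part x + 1 <= m)%Z) by lia.
    apply IZR_le in H'. rewrite plus_IZR in H'.
    rewrite Rabs_left by lra. apply Rle_trans with (1 - frac x); [apply Rmin_r | lra].
Qed.

Lemma dnorm_attained x : exists m, dnorm x = Rabs (x - IZR m).
Proof.
  unfold dnorm. pose proof (IZR_Int_part_add_frac x). pose proof (frac_bounds x).
  unfold Rmin; destruct Rle_dec.
  - exists (Int_part x). rewrite Rabs_right; lra.
  - exists (Int_part x + 1)%Z. rewrite plus_IZR, Rabs_left; lra.
Qed.

Lemma dnorm_le_add_dist x y : dnorm x <= dnorm y + Rabs (x - y).
Proof.
  destruct (dnorm_attained y) as [m ->].
  apply Rle_trans with (Rabs (x - IZR m)); [apply dnorm_le_dist|].
  replace (x - IZR m) with ((y - IZR m) + (x - y)) by ring. apply Rabs_triang.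
Qed.

Lemma dnorm_lipschitz x y : Rabs (dnorm x - dnorm y) <= Rabs (x - y).
Proof.
  apply Rabs_le. pose proof (dnorm_le_add_dist x y).
  pose proof (dnorm_le_add_dist y x) as Hyx. rewrite Rabs_minus_sym in Hyx. lra.
Qed.

Lemma dnorm_opp x : dnorm (- x) = dnorm x.
Proof.
  assert (H : forall y, dnorm (- y) <= dnorm y).
  { intros y. destruct (dnorm_attained y) as [m ->].
    apply Rle_trans with (Rabs (- y - IZR (- m))); [apply dnorm_le_dist|].
    rewrite opp_IZR, <- Rabs_Ropp. right. f_equal. ring. }
  apply Rle_antisym; [apply H|]. rewrite <- (Ropp_involutive x) at 1. apply H.
Qed.

Lemma dnorm_add_IZR x m : dnorm (x + IZR m) = dnorm x.
Proof.
  rewrite <- (IZR_Int_part_add_frac x). pose proof (frac_bounds x).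
  replace (IZR (Int_part x) + frac x + IZR m) with (IZR (Int_part x + m) + frac x)
    by (rewrite plus_IZR; ring).
  rewrite !dnorm_IZR_add by lra. reflexivity.
Qed.

Lemma dnorm_small x : 0 <= x <= 1/2 -> dnorm x = x.
Proof.
  intros Hx. replace x with (IZR 0 + x) at 1 by (simpl; ring).
  rewrite dnorm_IZR_add by lra. apply Rmin_left. lra.
Qed.

Lemma dnorm_le_half x : dnorm x <= 1/2.
Proof. unfold dnorm, Rmin. destruct Rle_dec; lra. Qed.

Lemma dnorm_INR n : dnorm (INR n) = 0.
Proof.
  rewrite INR_IZR_INZ. replace (IZR (Z.of_nat n)) with (0 + IZR (Z.of_nat n)) by ring.
  rewrite dnorm_add_IZR. apply dnorm_small. lra.
Qed.

Lemma dnorm_eq_cases x L : dnorm x = L -> eqmod1 x L \/ eqmod1 x (- L).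
Proof.
  intros H. destruct (dnorm_attained x) as [m Hm]. rewrite H in Hm.
  unfold Rabs in Hm. destruct Rcase_abs; [right|left]; exists m; lra.
Qed.

Lemma dnorm_gt_left x L : 0 < L <= 1/2 -> L <= dnorm x -> ~ eqmod1 x L ->
  exists e, 0 < e /\ forall d, 0 < d <= e -> L < dnorm (x - d).
Proof.
  intros HL Hx Hno. destruct (Rle_lt_or_eq_dec _ _ Hx) as [Hlt|Heq].
  - exists ((dnorm x - L) / 2). split; [lra|]. intros d Hd.
    pose proof (dnorm_le_add_dist x (x - d)) as Hlip.
    replace (x - (x - d)) with d in Hlip by ring. rewrite Rabs_right in Hlip; lra.
  - destruct (dnorm_eq_cases x L (eq_sym Heq)) as [|[m Hm]]; [contradiction|].
    assert (HL2 : L < 1/2).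
    { destruct (Req_dec L (1/2)) as [E|]; [|lra]. exfalso. apply Hno.
      exists (m - 1)%Z. rewrite minus_IZR. lra. }
    exists ((1 - 2 * L) / 2). split; [lra|]. intros d Hd.
    replace (x - d) with (IZR (m - 1) + (1 - L - d)) by (rewrite minus_IZR; lra).
    rewrite dnorm_IZR_add by lra. apply Rmin_Rgt_r. lra.
Qed.

Lemma balance_bounds w a L : 0 <= w -> 0 < a -> 0 <= L -> 0 <= w * L / (w + a) <= L.
Proof.
  intros Hw Ha HL. split.
  - apply Rle_div_of_mul_le; nra.
  - apply Rdiv_le_of_le_mul; nra.
Qed.

Lemma balance_antitone w a b L : 0 <= w -> 0 <= L -> 0 < a <= b ->
  w * L / (w + b) <= w * L / (w + a).
Proof.
  intros Hw HL Hab. unfold Rdiv. apply Rmult_le_compat_l; [nra|].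
  apply Rinv_le_contravar; lra.
Qed.

(* [w L / (w + a)] is where the decreasing [L - x a] meets the increasing [x w]. *)
Lemma min_le_balance x w a L : 0 <= x -> 0 <= w -> 0 < a ->
  Rmin (L - x * a) (x * w) <= w * L / (w + a).
Proof.
  intros Hx Hw Ha. destruct (Rle_lt_dec (x * (w + a)) L).
  - apply Rle_trans with (x * w); [apply Rmin_r|]. apply Rle_div_of_mul_le; nra.
  - apply Rle_trans with (L - x * a); [apply Rmin_l|]. apply Rle_div_of_mul_le; nra.
Qed.

Lemma min_dnorm_le_balance t t0 a w L : 0 < a -> 0 <= w ->
  eqmod1 (t0 * a) L -> eqmod1 (t0 * w) 0 -> t <= t0 -> (t0 - t) * a <= L ->
  Rmin (dnorm (t * a)) (dnorm (t * w)) <= w * L / (w + a).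
Proof.
  intros Ha Hw [m Hm] [z Hz] Ht HtL.
  eapply Rle_trans; [|apply (min_le_balance (t0 - t)); lra].
  apply Rle_trans with (Rmin (dnorm (t * a)) ((t0 - t) * w)).
  - apply Rle_min_compat_l. eapply Rle_trans; [apply (dnorm_le_dist _ z)|].
    rewrite Rabs_left1; nra.
  - apply Rle_min_compat_r. eapply Rle_trans; [apply (dnorm_le_dist _ m)|].
    rewrite Rabs_right; nra.
Qed.

Lemma for_large_and (P Q : nat -> Prop) :
  for_large P -> for_large Q -> for_large (fun m => P m /\ Q m).
Proof.
  intros [N1 H1] [N2 H2]. exists (Nat.max N1 N2). intros m Hm. split; [apply H1|apply H2]; lia.
Qed.

Lemma for_large_forall_lt (P : nat -> nat -> Prop) n :
  (forall i, (i < n)%nat -> for_large (P i)) ->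
  for_large (fun m => forall i, (i < n)%nat -> P i m).
Proof.
  induction n as [|n IH]; intros H.
  - exists 0%nat. intros m _ i Hi. lia.
  - destruct (for_large_and _ _ (IH ltac:(intros i Hi; apply H; lia)) (H n ltac:(lia)))
      as [N HN].
    exists N. intros m Hm i Hi. destruct (HN m Hm) as [Hlt Hn].
    destruct (Nat.eq_dec i n) as [->|]; [exact Hn | apply Hlt; lia].
Qed.

Lemma for_large_forall_index (P : nat -> nat -> Prop) k :
  (forall i, (1 <= i <= k)%nat -> for_large (P i)) ->
  for_large (fun m => forall i, (1 <= i <= k)%nat -> P i m).
Proof.
  intros H. destruct (for_large_forall_lt (fun i m => (1 <= i)%nat -> P i m) (S k))
    as [N HN].
  - intros i Hi. destruct (Nat.eq_dec i 0) as [->|Hi0].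
    + exists 0%nat. intros m _ H0. lia.
    + destruct (H i ltac:(lia)) as [N HN]. exists N. auto.
  - exists N. intros m Hm i Hi. apply HN; lia.
Qed.

Lemma for_large_div_le c a e : 0 <= a -> 0 < e -> for_large (fun m => c / (INR m + a) <= e).
Proof.
  intros Ha He. destruct (INR_archimed e (Rmax c 1) He) as [N HN].
  exists N. intros m Hm. apply le_INR in Hm.
  assert (Hc : c <= INR N * e) by (pose proof (Rmax_l c 1); lra).
  assert (H1 : 1 <= INR N * e) by (pose proof (Rmax_r c 1); lra).
  apply Rdiv_le_of_le_mul; nra.
Qed.

Lemma mint_le_dnorm v k t i : (1 <= i <= k)%nat -> mint v k t <= dnorm (t * INR (v i)).
Proof.
  induction k as [|k IH]; intros Hi; [lia|]. simpl.
  destruct (Nat.eq_dec i (S k)) as [->|Hne]; [apply Rmin_r|].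
  eapply Rle_trans; [apply Rmin_l | apply IH; lia].
Qed.

Lemma mint_ge v k t c : c <= 1 ->
  (forall i, (1 <= i <= k)%nat -> c <= dnorm (t * INR (v i))) -> c <= mint v k t.
Proof.
  intros Hc. induction k as [|k IH]; intros H; simpl; [exact Hc|].
  apply Rmin_glb; [apply IH; intros i Hi|]; apply H; lia.
Qed.

Lemma mint_gt v k t c : c < 1 ->
  (forall i, (1 <= i <= k)%nat -> c < dnorm (t * INR (v i))) -> c < mint v k t.
Proof.
  intros Hc. induction k as [|k IH]; intros H; simpl; [exact Hc|].
  apply Rmin_Rgt_r. split; [apply IH; intros i Hi|]; apply H; lia.
Qed.

Lemma mint_ext v v' k t : (forall i, (1 <= i <= k)%nat -> v i = v' i) ->
  mint v k t = mint v' k t.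
Proof.
  induction k as [|k IH]; intros H; simpl; [reflexivity|].
  rewrite IH, (H (S k)); [reflexivity | lia | intros i Hi; apply H; lia].
Qed.

Lemma mint_opp v k t : mint v k (- t) = mint v k t.
Proof.
  induction k as [|k IH]; simpl; [reflexivity|].
  rewrite IH, Ropp_mult_distr_l_reverse, dnorm_opp. reflexivity.
Qed.

Lemma mint_add_IZR v k t m : mint v k (t + IZR m) = mint v k t.
Proof.
  induction k as [|k IH]; simpl; [reflexivity|]. rewrite IH.
  replace ((t + IZR m) * INR (v (S k))) with (t * INR (v (S k)) + IZR (m * Z.of_nat (v (S k))))
    by (rewrite mult_IZR, <- INR_IZR_INZ; ring).
  rewrite dnorm_add_IZR. reflexivity.
Qed.

Lemma Rabs_Rmin_sub_le a b c d e : Rabs (a - c) <= e -> Rabs (b - d) <= e ->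
  Rabs (Rmin a b - Rmin c d) <= e.
Proof. unfold Rmin, Rabs. repeat destruct Rle_dec; repeat destruct Rcase_abs; lra. Qed.

Lemma mint_lipschitz v k : exists K, 0 <= K /\
  forall t s, Rabs (mint v k t - mint v k s) <= K * Rabs (t - s).
Proof.
  induction k as [|k [K [HK IH]]].
  - exists 0. split; [lra|]. intros t s. simpl. rewrite Rminus_diag, Rabs_R0. lra.
  - set (V := INR (v (S k))). assert (HV : 0 <= V) by apply pos_INR.
    exists (K + V). split; [lra|]. intros t s. simpl. fold V.
    assert (Hdn : Rabs (dnorm (t * V) - dnorm (s * V)) <= (K + V) * Rabs (t - s)).
    { eapply Rle_trans; [apply dnorm_lipschitz|].
      rewrite <- Rmult_minus_distr_r, Rabs_mult, (Rabs_right V) by lra.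
      pose proof (Rabs_pos (t - s)). nra. }
    assert (Hm : Rabs (mint v k t - mint v k s) <= (K + V) * Rabs (t - s)).
    { pose proof (IH t s). pose proof (Rabs_pos (t - s)). nra. }
    exact (Rabs_Rmin_sub_le _ _ _ _ _ Hm Hdn).
Qed.

Lemma lipschitz_continuity_pt (f : R -> R) K x : 0 <= K ->
  (forall t s, Rabs (f t - f s) <= K * Rabs (t - s)) -> continuity_pt f x.
Proof.
  intros HK H eps Heps. exists (eps / (K + 1)). split.
  - apply Rdiv_lt_0_compat; lra.
  - intros y [_ Hy]. simpl in *. unfold R_dist in *.
    eapply Rle_lt_trans; [apply H|].
    apply Rle_lt_trans with ((K + 1) * Rabs (y - x)); [pose proof (Rabs_pos (y - x)); nra|].
    apply Rlt_le_trans with ((K + 1) * (eps / (K + 1))); [apply Rmult_lt_compat_l; lra|].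
    right. field. lra.
Qed.

Lemma mint_continuity_pt v k t : continuity_pt (mint v k) t.
Proof.
  destruct (mint_lipschitz v k) as [K [HK H]]. exact (lipschitz_continuity_pt _ K t HK H).
Qed.

Lemma mint_vext v k w t :
  mint (vext v (S k) w) (S k) t = Rmin (mint v k t) (dnorm (t * INR w)).
Proof.
  simpl. unfold vext at 2. rewrite Nat.eqb_refl. f_equal. apply mint_ext.
  intros i Hi. unfold vext. destruct (Nat.eqb_spec i (S k)); [lia|reflexivity].
Qed.

Lemma Reqb_true x y : Reqb x y = true <-> x = y.
Proof. unfold Reqb. destruct Req_EM_T; split; congruence. Qed.

Lemma largest_idx_spec (P : nat -> bool) k i : (1 <= i <= k)%nat -> P i = true ->
  let r := largest_idx P k in
  (1 <= r <= k)%nat /\ P r = true /\ forall j, (r < j <= k)%nat -> P j = false.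
Proof.
  induction k as [|k IH]; intros Hi HP; [lia|]. simpl.
  destruct (P (S k)) eqn:E.
  - repeat split; auto; intros; lia.
  - destruct (Nat.eq_dec i (S k)) as [->|Hne]; [congruence|].
    destruct (IH ltac:(lia) HP) as [Hr [HPr Hgt]].
    repeat split; auto; try lia. intros j Hj.
    destruct (Nat.eq_dec j (S k)) as [->|]; [exact E | apply Hgt; lia].
Qed.

Lemma largest_hit_spec v k t a i : 0 <= a < 1 -> (1 <= i <= k)%nat ->
  eqmod1 (t * INR (v i)) a ->
  let r := largest_idx (fun j => Reqb (frac (t * INR (v j))) a) k in
  (1 <= r <= k)%nat /\ eqmod1 (t * INR (v r)) a /\
  forall j, (r < j <= k)%nat -> ~ eqmod1 (t * INR (v j)) a.
Proof.
  intros Ha Hi Hhit.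
  destruct (largest_idx_spec (fun j => Reqb (frac (t * INR (v j))) a) k i Hi)
    as [Hr [HPr Hgt]].
  { now apply Reqb_true, frac_eq_iff. }
  split; [exact Hr|]. split.
  - now apply (frac_eq_iff _ _ Ha), Reqb_true.
  - intros j Hj Hjhit. apply (frac_eq_iff _ _ Ha), Reqb_true in Hjhit.
    rewrite Hgt in Hjhit by exact Hj. discriminate.
Qed.

Lemma is_denom_exists t q0 p : (0 < q0)%nat -> t * INR q0 = IZR p -> exists q, is_denom t q.
Proof.
  intros Hq0 Ht. set (Q := Z.of_nat q0). set (g := Z.gcd p Q).
  destruct (Z.gcd_divide_l p Q) as [p' Hp']. destruct (Z.gcd_divide_r p Q) as [q' Hq'].
  fold g in Hp', Hq'.
  assert (Hg : (0 < g)%Z).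
  { assert (g <> 0%Z) by (intros E; apply Z.gcd_eq_0 in E; unfold Q in E; lia).
    pose proof (Z.gcd_nonneg p Q). lia. }
  assert (Hq'pos : (0 < q')%Z) by (unfold Q in Hq'; nia).
  assert (Hcop : Z.gcd p' q' = 1%Z).
  { pose proof (Z.gcd_mul_mono_r p' q' g) as E. rewrite <- Hp', <- Hq' in E. fold g in E.
    rewrite Z.abs_eq in E by lia. nia. }
  exists (Z.to_nat q'). split; [lia|]. exists p'. split.
  - rewrite INR_IZR_INZ, Z2Nat.id by lia.
    assert (HQ : INR q0 = IZR q' * IZR g) by (rewrite INR_IZR_INZ, <- mult_IZR; now f_equal).
    assert (0 < IZR q') by (apply IZR_lt; lia). assert (0 < IZR g) by (apply IZR_lt; lia).
    rewrite Hp', mult_IZR, HQ in Ht. field_simplify_eq; [|lra].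
    apply Rmult_eq_reg_r with (IZR g); lra.
  - rewrite Z2Nat.id by lia. exact Hcop.
Qed.

Lemma denom_divide_int t q w : is_denom t q -> Nat.divide q w -> eqmod1 (t * INR w) 0.
Proof.
  intros [Hq [p [-> _]]] [c ->]. exists (p * Z.of_nat c)%Z.
  rewrite mult_INR, mult_IZR, <- INR_IZR_INZ. field. apply not_0_INR. lia.
Qed.

Section Loneliness.

Variables (v : nat -> nat) (k : nat) (L : R).
Hypothesis k_pos : (1 <= k)%nat.
Hypothesis v_pos : forall i, (1 <= i <= k)%nat -> (0 < v i)%nat.
Hypothesis v_incr :
  forall i j, (1 <= i)%nat -> (i < j)%nat -> (j <= k)%nat -> (v i < v j)%nat.
Hypothesis v_ML : is_ML v k L.

Lemma INR_v_pos i : (1 <= i <= k)%nat -> 0 < INR (v i).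
Proof. intros Hi. apply lt_0_INR, v_pos, Hi. Qed.

Lemma INR_v_le i j : (1 <= i)%nat -> (i <= j <= k)%nat -> INR (v i) <= INR (v j).
Proof.
  intros Hi Hj. apply le_INR. destruct (Nat.eq_dec i j) as [->|]; [lia|].
  apply Nat.lt_le_incl, v_incr; lia.
Qed.

Lemma mint_le_ML t : mint v k t <= L.
Proof. exact (proj2 v_ML t). Qed.

Lemma ML_bounds : 0 < L <= 1/2.
Proof.
  destruct v_ML as [[t0 Ht0] _]. split.
  - set (V := INR (v k)). assert (HV : 1 <= V) by (apply (le_INR 1), v_pos; lia).
    set (x := 1 / (2 * V)).
    assert (Hx : 0 < x /\ x * V = 1/2) by (split; [apply Rdiv_lt_0_compat|unfold x; field]; lra).
    apply Rlt_le_trans with x; [lra|]. eapply Rle_trans; [|apply (mint_le_ML x)].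
    apply mint_ge; [nra|]. intros i Hi.
    assert (Hvi : 1 <= INR (v i) <= V) by (split; [apply (le_INR 1), v_pos | apply INR_v_le]; lia).
    rewrite dnorm_small; nra.
  - rewrite <- Ht0. eapply Rle_trans; [apply (mint_le_dnorm _ _ _ 1); lia | apply dnorm_le_half].
Qed.

Lemma ML_point_hits_left t0 : mint v k t0 = L ->
  exists i, (1 <= i <= k)%nat /\ eqmod1 (t0 * INR (v i)) L.
Proof.
  intros Ht0. pose proof ML_bounds as HL.
  destruct (classic (exists i, (1 <= i <= k)%nat /\ eqmod1 (t0 * INR (v i)) L))
    as [|Hno]; [assumption|exfalso].
  assert (Hlarge : for_large (fun m => forall i, (1 <= i <= k)%nat ->
                     L < dnorm ((t0 - / (INR m + 1)) * INR (v i)))).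
  { apply for_large_forall_index. intros i Hi.
    destruct (dnorm_gt_left (t0 * INR (v i)) L HL) as [e [He Hgt]].
    { rewrite <- Ht0. now apply mint_le_dnorm. }
    { intros Hhit. apply Hno. eauto. }
    destruct (for_large_div_le (INR (v i)) 1 e) as [N HN]; [lra|exact He|].
    exists N. intros m Hm. pose proof (pos_INR m). pose proof (INR_v_pos i Hi).
    replace ((t0 - / (INR m + 1)) * INR (v i))
      with (t0 * INR (v i) - INR (v i) / (INR m + 1)) by (field; lra).
    apply Hgt. split; [apply Rdiv_lt_0_compat; lra | now apply HN]. }
  destruct Hlarge as [N HN].
  apply (Rlt_irrefl L), Rlt_le_trans with (mint v k (t0 - / (INR N + 1))).
  - apply mint_gt; [lra|]. apply HN. lia.
  - apply mint_le_ML.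
Qed.

Lemma ML_point_hits_right t0 : mint v k t0 = L ->
  exists i, (1 <= i <= k)%nat /\ eqmod1 (t0 * INR (v i)) (1 - L).
Proof.
  intros Ht0. rewrite <- mint_opp in Ht0.
  destruct (ML_point_hits_left _ Ht0) as [i [Hi Hhit]]. exists i. split; [exact Hi|].
  apply eqmod1_opp. now rewrite Ropp_mult_distr_l.
Qed.

Lemma rho_spec t0 : mint v k t0 = L ->
  (1 <= rho v k L t0 <= k)%nat /\ eqmod1 (t0 * INR (v (rho v k L t0))) L /\
  forall i, (rho v k L t0 < i <= k)%nat -> ~ eqmod1 (t0 * INR (v i)) L.
Proof.
  intros Ht0. pose proof ML_bounds.
  destruct (ML_point_hits_left t0 Ht0) as [i [Hi Hhit]].
  apply (largest_hit_spec v k t0 L i); [lra | exact Hi | exact Hhit].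
Qed.

Lemma lam_spec t0 : mint v k t0 = L ->
  (1 <= lam v k L t0 <= k)%nat /\ eqmod1 (t0 * INR (v (lam v k L t0))) (1 - L) /\
  forall i, (lam v k L t0 < i <= k)%nat -> ~ eqmod1 (t0 * INR (v i)) (1 - L).
Proof.
  intros Ht0. pose proof ML_bounds.
  destruct (ML_point_hits_right t0 Ht0) as [i [Hi Hhit]].
  apply (largest_hit_spec v k t0 (1 - L) i); [lra | exact Hi | exact Hhit].
Qed.

Lemma inT_iff t : inT v k L t <-> 0 <= t < 1 /\ mint v k t = L.
Proof.
  pose proof ML_bounds. split.
  - intros [Ht Hge]. split; [exact Ht|].
    apply Rle_antisym; [apply mint_le_ML | apply mint_ge; [lra|exact Hge]].
  - intros [Ht Ht0]. split; [exact Ht|]. intros i Hi. rewrite <- Ht0. now apply mint_le_dnorm.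
Qed.

(* [t0 (v_rho + v_lambda)] is an integer, so [t0] is rational. *)
Lemma inT_mul_int D t0 w : is_lcm_denoms v k L D -> inT v k L t0 -> Nat.divide D w ->
  eqmod1 (t0 * INR w) 0.
Proof.
  intros [_ [HD _]] HT Hw. pose proof (proj2 (proj1 (inT_iff t0) HT)) as Ht0.
  destruct (rho_spec t0 Ht0) as [Hr [[m1 Hm1] _]].
  destruct (lam_spec t0 Ht0) as [_ [[m2 Hm2] _]].
  destruct (is_denom_exists t0 (v (rho v k L t0) + v (lam v k L t0)) (m1 + m2 + 1))
    as [q Hq].
  - pose proof (v_pos _ Hr). lia.
  - rewrite plus_INR, !plus_IZR. lra.
  - exact (denom_divide_int t0 q w Hq (Nat.divide_trans _ _ _ (HD t0 q HT Hq) Hw)).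
Qed.

Lemma balance_lower_index t0 r i : (1 <= r <= k)%nat -> (1 <= i <= k)%nat ->
  mint v k t0 = L -> ((r < i)%nat -> ~ eqmod1 (t0 * INR (v i)) L) ->
  for_large (fun w => INR w * L / (INR w + INR (v r)) <=
                      dnorm ((t0 - L / (INR w + INR (v r))) * INR (v i))).
Proof.
  intros Hr Hi Ht0 Hno. pose proof ML_bounds as HL.
  set (a := INR (v r)). assert (Ha : 0 < a) by now apply INR_v_pos.
  assert (Hvi : 0 < INR (v i)) by now apply INR_v_pos.
  assert (Hdi : L <= dnorm (t0 * INR (v i))) by (rewrite <- Ht0; now apply mint_le_dnorm).
  destruct (le_lt_dec i r) as [Hir|Hri].
  - exists 0%nat. intros w _. pose proof (pos_INR w).
    assert (Hvir : INR (v i) <= a) by (apply INR_v_le; lia).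
    set (s := L / (INR w + a)). assert (Hs : 0 < s) by (apply Rdiv_lt_0_compat; lra).
    replace (INR w * L / (INR w + a)) with (L - s * a) by (unfold s; field; lra).
    pose proof (dnorm_le_add_dist (t0 * INR (v i)) ((t0 - s) * INR (v i))) as Hlip.
    replace (t0 * INR (v i) - (t0 - s) * INR (v i)) with (s * INR (v i)) in Hlip by ring.
    rewrite Rabs_right in Hlip by nra. nra.
  - destruct (dnorm_gt_left _ L HL Hdi (Hno Hri)) as [e [He Hgt]].
    destruct (for_large_div_le (L * INR (v i)) a e) as [N HN]; [lra|exact He|].
    exists N. intros w Hw. pose proof (pos_INR w).
    replace ((t0 - L / (INR w + a)) * INR (v i))
      with (t0 * INR (v i) - L * INR (v i) / (INR w + a)) by (field; lra).
    apply Rle_trans with L; [apply balance_bounds; lra|].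
    left. apply Hgt. split; [apply Rdiv_lt_0_compat; nra | now apply HN].
Qed.

Lemma balance_lower t0 r : (1 <= r <= k)%nat -> mint v k t0 = L ->
  (forall i, (r < i <= k)%nat -> ~ eqmod1 (t0 * INR (v i)) L) ->
  for_large (fun w => eqmod1 (t0 * INR w) 0 ->
    INR w * L / (INR w + INR (v r)) <=
    mint (vext v (S k) w) (S k) (t0 - L / (INR w + INR (v r)))).
Proof.
  intros Hr Ht0 Hno. pose proof ML_bounds as HL.
  destruct (for_large_forall_index (fun i w => INR w * L / (INR w + INR (v r)) <=
              dnorm ((t0 - L / (INR w + INR (v r))) * INR (v i))) k) as [N HN].
  { intros i Hi. apply balance_lower_index; auto. intros Hri. apply Hno. lia. }
  exists N. intros w Hw [z Hz]. rewrite mint_vext.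
  pose proof (pos_INR w). assert (Ha : 0 < INR (v r)) by now apply INR_v_pos.
  set (M := INR w * L / (INR w + INR (v r))).
  assert (HM : 0 <= M <= L) by (apply balance_bounds; lra).
  apply Rmin_glb.
  - apply mint_ge; [lra|]. now apply HN.
  - replace ((t0 - L / (INR w + INR (v r))) * INR w) with (- M + IZR z)
      by (unfold M; rewrite Rmult_minus_distr_r, Hz; field; lra).
    rewrite dnorm_add_IZR, dnorm_opp, dnorm_small; lra.
Qed.

Lemma ML_ext_lower mu D : is_mu v k L mu -> is_lcm_denoms v k L D ->
  for_large (fun w => Nat.divide D w ->
    exists t, INR w * L / (INR w + INR (v mu)) <= mint (vext v (S k) w) (S k) t).
Proof.
  intros [[t1 [HT Hmu]] _] HD.
  pose proof (proj2 (proj1 (inT_iff t1) HT)) as Ht1.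
  destruct (rho_spec t1 Ht1) as [Hr [_ Hrno]].
  destruct (lam_spec t1 Ht1) as [Hl [_ Hlno]].
  destruct (Nat.le_gt_cases (rho v k L t1) (lam v k L t1)) as [Hrl|Hlr].
  - rewrite Nat.min_l in Hmu by exact Hrl. subst mu.
    destruct (balance_lower t1 _ Hr Ht1 Hrno) as [N HN].
    exists N. intros w Hw HDw. eexists. apply HN; [exact Hw|].
    exact (inT_mul_int D t1 w HD HT HDw).
  - rewrite Nat.min_r in Hmu by lia. subst mu.
    destruct (balance_lower (- t1) _ Hl) as [N HN].
    { now rewrite mint_opp. }
    { intros i Hi. rewrite Ropp_mult_distr_l_reverse, eqmod1_opp. now apply Hlno. }
    exists N. intros w Hw HDw. eexists. apply HN; [exact Hw|].
    destruct (inT_mul_int D t1 w HD HT HDw) as [z Hz].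
    exists (- z)%Z. rewrite opp_IZR. lra.
Qed.

Lemma mint_vext_le_left_hit t0 t w r a : (1 <= r <= k)%nat ->
  eqmod1 (t0 * INR (v r)) L -> eqmod1 (t0 * INR w) 0 ->
  t <= t0 -> (t0 - t) * INR (v k) <= L -> 0 < a <= INR (v r) ->
  mint (vext v (S k) w) (S k) t <= INR w * L / (INR w + a).
Proof.
  intros Hr Hhit Hint Ht Hclose Ha. pose proof ML_bounds. pose proof (pos_INR w).
  rewrite mint_vext.
  eapply Rle_trans; [apply Rle_min_compat_r, (mint_le_dnorm _ _ _ _ Hr)|].
  eapply Rle_trans; [|apply (balance_antitone _ _ (INR (v r))); lra].
  apply (min_dnorm_le_balance t t0); try lra.
  - exact Hhit.
  - exact Hint.
  - pose proof (INR_v_le r k ltac:(lia) ltac:(lia)). nra.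
Qed.

Lemma ML_ext_upper_near mu D t0 t w : is_mu v k L mu -> is_lcm_denoms v k L D ->
  inT v k L t0 -> Nat.divide D w -> Rabs (t - t0) * INR (v k) <= L ->
  mint (vext v (S k) w) (S k) t <= INR w * L / (INR w + INR (v mu)).
Proof.
  intros [[t1 [HT1 Hmu1]] Hmu] HD HT HDw Hclose.
  pose proof (proj2 (proj1 (inT_iff t1) HT1)) as Ht1.
  pose proof (proj2 (proj1 (inT_iff t0) HT)) as Ht0.
  assert (Hmu_pos : (1 <= mu)%nat).
  { rewrite <- Hmu1. pose proof (proj1 (rho_spec t1 Ht1)). pose proof (proj1 (lam_spec t1 Ht1)).
    lia. }
  specialize (Hmu t0 HT).
  destruct (rho_spec t0 Ht0) as [Hr [Hrhit _]].
  destruct (lam_spec t0 Ht0) as [Hl [Hlhit _]].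
  assert (Hint := inT_mul_int D t0 w HD HT HDw).
  assert (Hvmu := INR_v_pos mu ltac:(lia)).
  destruct (Rle_lt_dec t t0) as [Htt0|Ht0t].
  - rewrite Rabs_left1 in Hclose by lra.
    apply (mint_vext_le_left_hit t0 t w (rho v k L t0)); auto; [lra|].
    split; [exact Hvmu|]. apply INR_v_le; lia.
  - rewrite Rabs_right in Hclose by lra. rewrite <- mint_opp.
    apply (mint_vext_le_left_hit (- t0) (- t) w (lam v k L t0) _ Hl); [| | lra | lra |].
    + rewrite Ropp_mult_distr_l_reverse. now apply eqmod1_opp.
    + destruct Hint as [z Hz]. exists (- z)%Z. rewrite opp_IZR. lra.
    + split; [exact Hvmu|]. apply INR_v_le; lia.
Qed.

Lemma ML_ext_upper_interval mu D lo hi : is_mu v k L mu -> is_lcm_denoms v k L D ->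
  0 <= lo <= hi -> hi <= 1 -> (hi - lo) * INR (v k) <= L ->
  for_large (fun w => Nat.divide D w -> forall t, lo <= t <= hi ->
    mint (vext v (S k) w) (S k) t <= INR w * L / (INR w + INR (v mu))).
Proof.
  intros Hmu HD Hlo Hhi Hwidth. pose proof ML_bounds as HL.
  assert (Hmu_pos : (1 <= mu <= k)%nat).
  { destruct Hmu as [[t1 [HT1 <-]] _]. pose proof (proj2 (proj1 (inT_iff t1) HT1)) as Ht1.
    pose proof (proj1 (rho_spec t1 Ht1)). pose proof (proj1 (lam_spec t1 Ht1)). lia. }
  pose proof (INR_v_pos mu Hmu_pos) as Hvmu.
  destruct (continuity_ab_maj (mint v k) lo hi ltac:(lra)
              (fun c _ => mint_continuity_pt v k c)) as [tmax [Hmax Htmax]].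
  destruct (Rlt_le_dec (mint v k tmax) L) as [Hgap|Hat].
  - destruct (for_large_div_le (L * INR (v mu)) (INR (v mu)) (L - mint v k tmax))
      as [N HN]; [lra|lra|].
    exists N. intros w Hw _ t Ht. specialize (HN w Hw). pose proof (pos_INR w).
    rewrite mint_vext. eapply Rle_trans; [apply Rmin_l|].
    eapply Rle_trans; [apply (Hmax t Ht)|].
    replace (INR w * L / (INR w + INR (v mu)))
      with (L - L * INR (v mu) / (INR w + INR (v mu))) by (field; lra).
    lra.
  - assert (Htmax1 : tmax < 1).
    { destruct (Rle_lt_or_eq_dec tmax 1) as [|E]; [lra|assumption|exfalso]. subst tmax.
      pose proof (mint_le_dnorm v k 1 1 ltac:(lia)) as H1.
      rewrite Rmult_1_l, dnorm_INR in H1. lra. }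
    assert (HT : inT v k L tmax).
    { apply inT_iff. split; [lra|]. apply Rle_antisym; [apply mint_le_ML | exact Hat]. }
    exists 0%nat. intros w _ HDw t Ht.
    apply (ML_ext_upper_near mu D tmax t w Hmu HD HT HDw).
    eapply Rle_trans; [|exact Hwidth]. apply Rmult_le_compat_r; [apply pos_INR|].
    unfold Rabs. destruct Rcase_abs; lra.
Qed.

Lemma cell_cover N t : (0 < N)%nat -> 0 <= t < 1 ->
  exists j, (j < N)%nat /\ INR j / INR N <= t <= (INR j + 1) / INR N.
Proof.
  intros HN Ht. assert (HNr : 0 < INR N) by now apply lt_0_INR.
  set (z := Int_part (t * INR N)). destruct (base_Int_part (t * INR N)) as [Hz1 Hz2]. fold z in Hz1, Hz2.
  assert (Hz0 : (0 <= z)%Z) by (enough (-1 < z)%Z by lia; apply lt_IZR; simpl; nra).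
  assert (HzN : (z < Z.of_nat N)%Z) by (apply lt_IZR; rewrite <- INR_IZR_INZ; nra).
  exists (Z.to_nat z). rewrite INR_IZR_INZ, Z2Nat.id by exact Hz0. split; [lia|].
  split; [apply Rdiv_le_of_le_mul | apply Rle_div_of_mul_le]; lra.
Qed.

Lemma ML_ext_upper mu D : is_mu v k L mu -> is_lcm_denoms v k L D ->
  for_large (fun w => Nat.divide D w -> forall t,
    mint (vext v (S k) w) (S k) t <= INR w * L / (INR w + INR (v mu))).
Proof.
  intros Hmu HD. pose proof ML_bounds as HL.
  destruct (INR_archimed L (INR (v k)) ltac:(lra)) as [N HN].
  assert (HN0 : (0 < N)%nat).
  { destruct N; [|lia]. pose proof (INR_v_pos k ltac:(lia)). simpl in HN. lra. }
  assert (HNr : 0 < INR N) by now apply lt_0_INR.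
  destruct (for_large_forall_lt (fun j w => Nat.divide D w -> forall t,
              INR j / INR N <= t <= (INR j + 1) / INR N ->
              mint (vext v (S k) w) (S k) t <= INR w * L / (INR w + INR (v mu))) N)
    as [C HC].
  { intros j Hj. pose proof (pos_INR j).
    assert (Hj1 : INR j + 1 <= INR N) by (rewrite <- S_INR; apply le_INR; lia).
    apply ML_ext_upper_interval; auto.
    - split; [apply Rle_div_of_mul_le; lra|].
      apply Rmult_le_compat_r; [left; apply Rinv_0_lt_compat|]; lra.
    - apply Rdiv_le_of_le_mul; lra.
    - replace (((INR j + 1) / INR N - INR j / INR N) * INR (v k)) with (INR (v k) / INR N)
        by (field; lra).
      apply Rdiv_le_of_le_mul; lra. }
  exists C. intros w Hw HDw t.
  rewrite <- (IZR_Int_part_add_frac t), Rplus_comm, mint_add_IZR.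
  destruct (cell_cover N (frac t) HN0 (frac_bounds t)) as [j [Hj Hjt]].
  exact (HC w Hw j Hj HDw _ Hjt).
Qed.

End Loneliness.

Theorem lemma9p4 (n : nat) (v : nat -> nat) (L : R) :
  (2 <= n)%nat ->
  (forall i, (1 <= i <= n - 1)%nat -> (0 < v i)%nat) ->
  (forall i j, (1 <= i)%nat -> (i < j)%nat -> (j <= n - 1)%nat -> (v i < v j)%nat) ->
  is_ML v (n - 1) L ->
  forall mu D : nat,
    is_mu v (n - 1) L mu ->
    is_lcm_denoms v (n - 1) L D ->
    exists C : nat, forall vn : nat,
      (C <= vn)%nat -> Nat.divide D vn ->
      is_ML (vext v n vn) n (INR vn * L / (INR vn + INR (v mu))).
Proof.
  intros Hn Hpos Hincr HML mu D Hmu HD.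
  destruct n as [|k]; [lia|]. replace (S k - 1)%nat with k in * by lia.
  destruct (for_large_and _ _ (ML_ext_lower v k L ltac:(lia) Hpos Hincr HML mu D Hmu HD)
                              (ML_ext_upper v k L ltac:(lia) Hpos Hincr HML mu D Hmu HD))
    as [C HC].
  exists C. intros w Hw HDw. destruct (HC w Hw) as [Hlower Hupper].
  destruct (Hlower HDw) as [t Ht]. split.
  - exists t. apply Rle_antisym; [apply Hupper|]; assumption.
  - now apply Hupper.
Qed.
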